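(* Let $U(x)=\big(|x|_1-\tfrac{d\lambda'}{\delta'}\big)^2$ and $U^p:=(U)^p$. Then for every $p\in\mathbb{N}$ and every $x\in\mathbb{R}_+^d$ at which $\gamma(x)$ is defined, $\nabla U^p(x)\cdot\gamma(x)\le 0$.
   Context: Fix an integer $d\ge 2$ and constants $\kappa',\lambda',\delta'>0$. Indices are cyclic modulo $d$: $x_0:=x_d$, $x_{d+1}:=x_1$. $\mathbb{R}_+^d=[0,\infty)^d$, $|x|_1=\sum_i|x_i|$, $|\cdot|$ the Euclidean norm, $e_k$ the standard basis. $b(x)=\sum_{k=1}^d e_k\big(\kappa'(x_{k-1}-x_{k+1})x_k+\lambda'-\delta'x_k\big)$ and $\gamma(x)=b(x)/|b(x)|$ (defined wherever $b(x)\ne0$, in particular on all of $\partial\mathbb{R}_+^d$). *)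

From HB Require Import structures.
From mathcomp Require Import all_boot all_order all_algebra.
From mathcomp Require Import all_classical all_reals all_analysis.
Set Implicit Arguments. Unset Strict Implicit. Unset Printing Implicit Defensive.
Import Order.TTheory GRing.Theory Num.Theory numFieldNormedType.Exports.
Local Open Scope classical_set_scope.
Local Open Scope ring_scope.

Section Defs.
Variables (R : realType) (d : nat).

(* points of R^d are functions 'I_d -> R; cyclic neighbours via ord_pred / ordS *)
Definition l1norm (x : 'I_d -> R) : R := \sum_(i < d) `|x i|.
Definition eucl_norm (x : 'I_d -> R) : R := Num.sqrt (\sum_(i < d) x i ^+ 2).

Definition drift (kap lam del : R) (x : 'I_d -> R) : 'I_d -> R :=
  fun k => kap * (x (ord_pred k) - x (ordS k)) * x k + lam - del * x k.

Definition gamma (kap lam del : R) (x : 'I_d -> R) : 'I_d -> R :=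
  fun k => drift kap lam del x k / eucl_norm (drift kap lam del x).

Definition U (lam del : R) (x : 'I_d -> R) : R :=
  (l1norm x - d%:R * lam / del) ^+ 2.

Definition nonneg_orthant (x : 'I_d -> R) : Prop := forall i, 0 <= x i.

Definition shift (x : 'I_d -> R) (k : 'I_d) (h : R) : 'I_d -> R :=
  fun i => if i == k then x i + h else x i.

(* g is the gradient of f at x, computed with one-sided (right) partial
   derivatives, so that it makes sense on the whole closed orthant R_+^d *)
Definition is_grad_plus (f : ('I_d -> R) -> R) (x g : 'I_d -> R) : Prop :=
  forall k : 'I_d,
    (f (shift x k h) - f x) / h @[h --> (0 : R)^'+] --> g k.

End Defs.

From Pilot Require Import Defs.
From HB Require Import structures.
From mathcomp Require Import all_boot all_order all_algebra.
From mathcomp Require Import all_classical all_reals all_analysis.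
From mathcomp Require Import ring.
Set Implicit Arguments. Unset Strict Implicit.
Import Order.TTheory GRing.Theory Num.Theory numFieldNormedType.Exports.
Local Open Scope classical_set_scope.
Local Open Scope ring_scope.

(* On the closed orthant |y|_1 is the sum of the coordinates, so moving x by
   h e_k (h >= 0) turns U^p into h |-> (a + h)^(2p) with a = |x|_1 - d lam/del:
   the one-sided gradient of U^p is the constant vector 2p a^(2p-1) (1, ..., 1).
   Its product with b(x) is 2p a^(2p-1) sum_k b_k(x), and the quadratic terms
   of the drift cancel around the cycle, leaving sum_k b_k(x) = -del a.  The
   product is therefore -2p del a^(2p) <= 0. *)

Lemma sum_cyclic_diff_mul (R : comPzRingType) (d : nat) (x : 'I_d -> R) :
  \sum_(k < d) (x (ord_pred k) - x (ordS k)) * x k = 0.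
Proof.
under eq_bigr do rewrite mulrBl.
rewrite sumrB (reindex (@ordS d)) /=; last first.
  by exists (@ord_pred d) => i _; [rewrite ordSK | rewrite ord_predK].
by apply/eqP; rewrite subr_eq0; apply/eqP/eq_bigr => i _; rewrite ordSK mulrC.
Qed.

Lemma cvg_diff_quot_exprn (R : numFieldType) (a : R) (n : nat) :
  ((a + h) ^+ n - a ^+ n) / h @[h --> (0 : R)^'] --> n%:R * a ^+ n.-1.
Proof.
have Df : is_derive a 1 ((id : R -> R) ^+ n) (n%:R * a ^+ n.-1).
  by apply: is_derive_eq; rewrite [_%:A]mulr1.
have := @ex_derive _ _ _ _ _ _ _ Df; rewrite /derivable.
have := @derive_val _ _ _ _ _ _ _ Df; rewrite /derive => ->.
apply: cvg_trans; apply: near_eq_cvg; near=> h.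
by rewrite /= !exprfctE -[_ *: _]/(_ * _) [_%:A]mulr1 mulrC (addrC h).
Unshelve. all: by end_near.
Qed.

Section DriftAndLyapunov.
Variables (R : realType) (d : nat) (kap lam del : R).

Definition mass_excess (x : 'I_d -> R) : R := l1norm x - d%:R * lam / del.

Lemma sum_drift (x : 'I_d -> R) :
  \sum_(k < d) drift kap lam del x k = d%:R * lam - del * \sum_(k < d) x k.
Proof.
rewrite /drift sumrB big_split /= sumr_const card_ord mulr_natl -mulr_sumr.
under eq_bigr do rewrite -mulrA.
by rewrite -mulr_sumr sum_cyclic_diff_mul mulr0 add0r.
Qed.

Lemma l1norm_orthant (x : 'I_d -> R) :
  nonneg_orthant x -> l1norm x = \sum_(k < d) x k.
Proof. by move=> x_ge0; apply: eq_bigr => i _; rewrite ger0_norm. Qed.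

Lemma l1norm_shift (x : 'I_d -> R) (k : 'I_d) (h : R) :
  nonneg_orthant x -> 0 <= h -> l1norm (Defs.shift x k h) = l1norm x + h.
Proof.
move=> x_ge0 h_ge0; rewrite /l1norm (bigD1 k) //= [X in _ = X + _](bigD1 k) //=.
rewrite /Defs.shift eqxx !ger0_norm ?addr_ge0 // addrAC; congr (_ + _ + _).
by apply: eq_bigr => i /negbTE ->.
Qed.

Lemma sum_drift_orthant (x : 'I_d -> R) :
  del != 0 -> nonneg_orthant x ->
  \sum_(k < d) drift kap lam del x k = - (del * mass_excess x).
Proof.
move=> del_neq0 x_ge0; rewrite sum_drift /mass_excess l1norm_orthant //.
by field.
Qed.

Lemma is_grad_plus_Upow (p : nat) (x : 'I_d -> R) :
  nonneg_orthant x ->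
  is_grad_plus (fun y => U lam del y ^+ p) x
    (fun=> (2 * p)%:R * mass_excess x ^+ (2 * p).-1).
Proof.
move=> x_ge0 k /=.
have := cvg_dnbhs_at_right (@cvg_diff_quot_exprn _ (mass_excess x) (2 * p)).
apply: cvg_trans.
apply: near_eq_cvg; near=> h.
have h_gt0 : 0 < h by near: h; exact: nbhs_right_gt.
by rewrite /U l1norm_shift ?ltW // addrAC -!exprM mulnC.
Unshelve. all: by end_near.
Qed.

End DriftAndLyapunov.

Lemma natr_exprn_pred_mulr (R : pzSemiRingType) (a : R) (n : nat) :
  n%:R * a ^+ n.-1 * a = n%:R * a ^+ n.
Proof. by case: n => [|n]; rewrite ?mul0r // -mulrA -exprSr. Qed.

Theorem lemma4p1 (R : realType) (d : nat) (kap lam del : R)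
  (hd : (2 <= d)%N) (hkap : 0 < kap) (hlam : 0 < lam) (hdel : 0 < del)
  (p : nat) (x : 'I_d -> R)
  (hx : nonneg_orthant x) (hb : drift kap lam del x <> (fun _ => 0)) :
  exists g : 'I_d -> R,
    is_grad_plus (fun y => U lam del y ^+ p) x g /\
    \sum_(k < d) g k * gamma kap lam del x k <= 0.
Proof.
set a := mass_excess lam del x.
exists (fun=> (2 * p)%:R * a ^+ (2 * p).-1); split.
  exact: is_grad_plus_Upow.
rewrite /gamma; under eq_bigr do rewrite mulrA.
rewrite -mulr_suml -mulr_sumr sum_drift_orthant ?gt_eqF //.
rewrite mulrN mulNr oppr_le0 divr_ge0 ?sqrtr_ge0 //.
rewrite -/a mulrCA natr_exprn_pred_mulr.
apply: mulr_ge0; first exact: ltW.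
by apply: mulr_ge0; rewrite // exprM exprn_ge0 ?sqr_ge0.
Qed.
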